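(* Let $k$ be a field, $E$ a finite-dimensional $k$-vector space, and $f\in\operatorname{End}_k(E)$ an endomorphism with annihilating polynomial $x^n$. Let $\bigcup_{j=1}^{r}\{e_j,f(e_j),\dots,f^{n_j-1}(e_j)\}$ be a Jordan basis of $E$ induced by $f$ (so $f^{n_j}(e_j)=0$ and these vectors form a basis of $E$). Then the generalized inverses $g\in\operatorname{End}_k(E)$ of $f$ are exactly the linear maps determined by $$g(f^i(e_j))=\begin{cases} f^{i-1}(e_j)+\sum_{s=1}^{r}\lambda^{s}_{j,i} f^{n_s-1}(e_s) & \text{if } i\ge 1,\\ \sum_{s=1}^{r}\sum_{h=0}^{n_s-1}\alpha^{s}_{j,h} f^{h}(e_s) & \text{if } i=0,\end{cases}$$ for $j\in\{1,\dots,r\}$ and $i\in\{0,\dots,n_j-1\}$, where $\lambda^{s}_{j,i},\alpha^{s}_{j,h}\in k$ are arbitrary scalars.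
   Context: A generalized inverse of an endomorphism $f$ of $E$ is an endomorphism $g$ of $E$ with $f\circ g\circ f=f$. *)

From HB Require Import structures.
From mathcomp Require Import all_boot all_order all_algebra.
Set Implicit Arguments. Unset Strict Implicit. Unset Printing Implicit Defensive.
Import GRing.Theory.
Local Open Scope ring_scope.

Definition gen_inverse (k : fieldType) (E : vectType k) (f g : 'End(E)) : Prop :=
  (f \o g \o f)%VF = f.

Definition jordan_family (k : fieldType) (E : vectType k) (f : 'End(E))
    (r : nat) (nj : 'I_r -> nat) (e : 'I_r -> E) : seq E :=
  [seq iter i f (e j) | j <- enum 'I_r, i <- iota 0 (nj j)].

Definition jordan_basis (k : fieldType) (E : vectType k) (f : 'End(E))
    (r : nat) (nj : 'I_r -> nat) (e : 'I_r -> E) : Prop :=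
  (forall j, 0 < nj j)%N /\ (forall j, iter (nj j) f (e j) = 0) /\
  basis_of fullv (jordan_family f nj e).

From HB Require Import structures.
From mathcomp Require Import all_boot all_order all_algebra.
Set Implicit Arguments. Unset Strict Implicit. Unset Printing Implicit Defensive.
Import GRing.Theory.
Local Open Scope ring_scope.

(* In a Jordan basis, f maps the non-top vectors f^i e_j (i < n_j - 1) bijectively
   onto the other basis vectors, so ker f is spanned by the tops f^(n_j - 1) e_j.
   The identity f g f = f need only be checked on the basis; it is trivial on the
   tops, and on f^(i-1) e_j with i >= 1 it says g (f^i e_j) - f^(i-1) e_j lies in
   ker f, which is the lambda-form. The values g (e_j) are unconstrained, whence
   the alpha-form. *)

Lemma perm_flatten_cat (T : eqType) (I : Type) (s t : I -> seq T) (l : seq I) :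
  perm_eq (flatten [seq s i ++ t i | i <- l])
          (flatten (map s l) ++ flatten (map t l)).
Proof.
elim: l => //= i l IH.
rewrite -!catA perm_cat2l.
by rewrite perm_sym perm_catCA perm_cat2l perm_sym.
Qed.

Lemma capv_lker_span (k : fieldType) (U V : vectType k) (f : 'Hom(U, V))
    (X : seq U) :
  free (map f X) -> (<<X>> :&: lker f)%VS = 0%VS.
Proof.
move=> free_fX; apply/eqP; rewrite -dimv_eq0 -leqn0.
have := limg_ker_dim f <<X>>%VS.
rewrite limg_span (eqP free_fX) size_map => dimX.
by rewrite -(leq_add2r (size X)) dimX add0n dim_span.
Qed.

Lemma memv_span_map_uniq (k : fieldType) (E : vectType k) (I : eqType)
    (F : I -> E) (s : seq I) v :
  uniq s -> v \in <<map F s>>%VS -> exists c : I -> k, v = \sum_(i <- s) c i *: F i.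
Proof.
elim: s v => [|x s IH] v.
  by rewrite span_nil memv0 => _ /eqP ->; exists (fun=> 0); rewrite big_nil.
rewrite /= span_cons => /andP[s'x uniq_s] /memv_addP[_ /vlineP[a ->] [w]].
move=> /(IH _ uniq_s)[c ->] ->.
exists (fun i => if i == x then a else c i); rewrite big_cons eqxx.
congr (_ + _); apply: eq_big_seq => i s_i.
by rewrite ifN //; apply: contraNneq s'x => <-.
Qed.

Section JordanBasis.

Variables (k : fieldType) (E : vectType k) (f : 'End(E)).
Variables (r : nat) (nj : 'I_r -> nat) (e : 'I_r -> E).
Hypothesis jordan_fe : jordan_basis f nj e.

Definition jordan_top j := iter (nj j).-1 f (e j).

Definition jordan_low j := [seq iter i f (e j) | i <- iota 0 (nj j).-1].

Lemma f_jordan_top j : f (jordan_top j) = 0.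
Proof.
have [nj_gt0 [f_nj _]] := jordan_fe.
by rewrite /jordan_top -iterS prednK.
Qed.

Lemma jordan_chain_split_top j :
  [seq iter i f (e j) | i <- iota 0 (nj j)] = jordan_low j ++ [:: jordan_top j].
Proof.
have [nj_gt0 _] := jordan_fe; rewrite /jordan_low /jordan_top.
by case: (nj j) (nj_gt0 j) => // m _; rewrite -addn1 iotaD map_cat addn1.
Qed.

Lemma jordan_chain_split_head j :
  [seq iter i f (e j) | i <- iota 0 (nj j)] = e j :: map f (jordan_low j).
Proof.
have [nj_gt0 _] := jordan_fe; rewrite /jordan_low.
case: (nj j) (nj_gt0 j) => // m _ /=; congr (_ :: _).
by rewrite -map_comp (iotaDl 1 0) -map_comp.
Qed.

Lemma lker_jordan_tops : lker f = <<[tuple jordan_top j | j < r]>>%VS.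
Proof.
have [_ [_ basisX]] := jordan_fe.
pose lows := flatten (map jordan_low (enum 'I_r)).
have perm_tops :
    perm_eq (jordan_family f nj e) (lows ++ [tuple jordan_top j | j < r]).
  rewrite /jordan_family (eq_map jordan_chain_split_top).
  have := perm_flatten_cat jordan_low (fun j => [:: jordan_top j]) (enum 'I_r).
  by rewrite flatten_map1.
have perm_heads : perm_eq (jordan_family f nj e) (map e (enum 'I_r) ++ map f lows).
  rewrite /jordan_family (eq_map jordan_chain_split_head) map_flatten -map_comp.
  have := perm_flatten_cat (fun j => [:: e j]) (map f \o jordan_low) (enum 'I_r).
  by rewrite flatten_map1.
have tops_ker : (<<[tuple jordan_top j | j < r]>> <= lker f)%VS.
  by apply/span_subvP => _ /mapP[j _ ->]; rewrite memv_ker f_jordan_top.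
apply/eqP; rewrite eqEsubv tops_ker andbT; apply/subvP => w ker_w.
have : w \in <<jordan_family f nj e>>%VS by rewrite (span_basis basisX) memvf.
rewrite (eq_span (perm_mem perm_tops)) span_cat => /memv_addP[v lows_v [u tops_u def_w]].
have free_f_lows : free (map f lows).
  by have := basis_free basisX; rewrite (perm_free perm_heads) => /catr_free.
suff : v \in (<<lows>> :&: lker f)%VS.
  by rewrite capv_lker_span // memv0 def_w => /eqP->; rewrite add0r.
rewrite memv_cap lows_v (_ : v = w - u) ?rpredB ?(subvP tops_ker u) //.
by rewrite def_w addrK.
Qed.

Lemma gen_inverse_jordanP g :
  gen_inverse f g <->
  (forall j i, (0 < i < nj j)%N -> g (iter i f (e j)) - iter i.-1 f (e j) \in lker f).
Proof.
have [_ [f_nj basisX]] := jordan_fe.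
split=> [fgf j i /andP[i_gt0 _] | g_chain].
  move/lfunP/(_ (iter i.-1 f (e j))): fgf; rewrite !comp_lfunE -iterS prednK // => fgf_i.
  by rewrite memv_ker linearB /= fgf_i -iterS prednK // subrr.
apply/lfunP => x.
have /span_lfunP fgf_X : {in jordan_family f nj e, (f \o g \o f)%VF =1 f}.
  move=> _ /allpairsPdep[j [i [_ + ->]]]; rewrite mem_iota => /andP[_ i_lt].
  rewrite !comp_lfunE -iterS; have [i1_lt | ] := ltnP i.+1 (nj j).
    by move: (g_chain j i.+1 i1_lt); rewrite memv_ker linearB => /eqP/subr0_eq.
  by move=> nj_le; rewrite (@anti_leq i.+1 (nj j)) ?i_lt // f_nj !linear0.
by apply: fgf_X; rewrite (span_basis basisX) memvf.
Qed.

Lemma jordan_family_decomp x :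
  exists c : 'I_r -> nat -> k, x = \sum_(s < r) \sum_(h < nj s) c s h *: iter h f (e s).
Proof.
have [_ [_ basisX]] := jordan_fe.
pose idx := [seq (j, i) | j <- enum 'I_r, i <- iota 0 (nj j)].
have idx_uniq : uniq idx.
  by apply: allpairs_uniq_dep => [|j _|[j i] [j' i'] _ _ [-> ->]];
    rewrite ?enum_uniq ?iota_uniq.
have X_idx : jordan_family f nj e = [seq iter p.2 f (e p.1) | p <- idx].
  by rewrite map_allpairs.
have := memvf x; rewrite -(span_basis basisX) X_idx => /memv_span_map_uniq[// | c ->].
exists (fun s h => c (s, h)); rewrite big_allpairs_dep /= big_enum /=.
by apply: eq_bigr => s _; rewrite -{1}(subn0 (nj s)) -/(index_iota 0 _) big_mkord.
Qed.

End JordanBasis.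

Theorem lemma3p9 (k : fieldType) (E : vectType k) (f : 'End(E)) (n : nat)
  (r : nat) (nj : 'I_r -> nat) (e : 'I_r -> E) :
  (forall x : E, iter n f x = 0) ->
  jordan_basis f nj e ->
  forall g : 'End(E),
    gen_inverse f g <->
    exists (lambda : 'I_r -> nat -> 'I_r -> k) (alpha : 'I_r -> 'I_r -> nat -> k),
      forall (j : 'I_r) (i : nat), (i < nj j)%N ->
        g (iter i f (e j)) =
          if (0 < i)%N then
            iter i.-1 f (e j) + \sum_(s < r) lambda j i s *: iter (nj s).-1 f (e s)
          else
            \sum_(s < r) \sum_(h < nj s) alpha j s h *: iter h f (e s).
Proof.
(* The nilpotency hypothesis is implied by the Jordan basis. *)
move=> _ jordan_fe g; apply: iff_trans (gen_inverse_jordanP jordan_fe g) _.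
rewrite (lker_jordan_tops jordan_fe).
set tops := [tuple _ | s < r].
have tops_nth (s : 'I_r) : tops`_s = iter (nj s).-1 f (e s).
  by rewrite -tnth_nth tnth_mktuple.
split=> [g_chain | [lambda [alpha g_def]] j i /andP[i_gt0 i_lt]].
  have [alpha g_e] := fin_all_exists (fun j => jordan_family_decomp jordan_fe (g (e j))).
  exists (fun j i s => coord tops s (g (iter i f (e j)) - iter i.-1 f (e j))), alpha.
  move=> j [| i] i_lt; first exact: g_e.
  have /coord_span w_tops := g_chain j i.+1 i_lt.
  rewrite ltn0Sn -[LHS](subrK (iter i.+1.-1 f (e j))) {1}w_tops addrC.
  by congr (_ + _); apply: eq_bigr => s _; rewrite tops_nth.
rewrite g_def // i_gt0 addrC addKr; apply: rpred_sum => s _.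
by rewrite -tops_nth rpredZ // memv_span ?mem_nth ?size_tuple.
Qed.
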